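(* Let $M,N$ be complete pointed metric spaces and $f\colon M\to N$ a Lipschitz map with $f(0_M)=0_N$. If $\widehat f\colon\mathcal F(M)\to\mathcal F(N)$ is compact, then $$\lim_{d(x,y)\to+\infty}\frac{d(f(x),f(y))}{d(x,y)}=0,$$ i.e. for every $\varepsilon>0$ there is $R>0$ such that $d(f(x),f(y))\le\varepsilon d(x,y)$ whenever $d(x,y)\ge R$.
   Context: Scalars are $\mathbb K=\mathbb R$ or $\mathbb C$. For a pointed metric space $(M,d,0_M)$, $\mathrm{Lip}_0(M)$ denotes the Banach space of Lipschitz functions $g\colon M\to\mathbb K$ with $g(0_M)=0$ normed by the best Lipschitz constant; $\delta(x)\in\mathrm{Lip}_0(M)^*$ is evaluation at $x$; the Lipschitz-free space $\mathcal F(M)$ is the norm-closed linear span of $\{\delta(x):x\in M\}$ in $\mathrm{Lip}_0(M)^*$. For a Lipschitz map $f\colon M\to N$ with $f(0_M)=0_N$, $\widehat f\colon\mathcal F(M)\to\mathcal F(N)$ is the unique bounded linear operator with $\widehat f(\delta(x))=\delta(f(x))$ for all $x\in M$. *)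

From Stdlib Require Import Reals List.
From Coquelicot Require Import Coquelicot.
Open Scope R_scope.

Record PointedMetricSpace := {
  pm_carrier :> Type;
  pm_dist : pm_carrier -> pm_carrier -> R;
  pm_base : pm_carrier;
  pm_dist_eq0 : forall x y, pm_dist x y = 0 <-> x = y;
  pm_dist_sym : forall x y, pm_dist x y = pm_dist y x;
  pm_dist_tri : forall x y z, pm_dist x z <= pm_dist x y + pm_dist y z
}.
Arguments pm_dist {p} _ _.

Definition Complete (M : PointedMetricSpace) : Prop :=
  forall u : nat -> M,
    (forall eps, 0 < eps -> exists n0, forall m n, (n0 <= m)%nat -> (n0 <= n)%nat ->
        pm_dist (u m) (u n) < eps) ->
    exists l : M, forall eps, 0 < eps -> exists n0, forall n, (n0 <= n)%nat ->
        pm_dist (u n) l < eps.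

(** Scalars: K = R (cplx = false) or K = C (cplx = true), both realised inside
    Coquelicot's C; in the real case a scalar is a complex number with zero
    imaginary part. *)
Definition IsScalar (cplx : bool) (a : C) : Prop :=
  if cplx then True else Im a = 0.

Definition Lipschitz {M N : PointedMetricSpace} (f : M -> N) : Prop :=
  exists L, forall x y, pm_dist (f x) (f y) <= L * pm_dist x y.

Definition LipLe {M : PointedMetricSpace} (g : M -> C) (c : R) : Prop :=
  forall x y, Cmod (Cminus (g x) (g y)) <= c * pm_dist x y.

Definition Lip0 (cplx : bool) {M : PointedMetricSpace} (g : M -> C) : Prop :=
  g (pm_base M) = RtoC 0 /\ (exists L, LipLe g L) /\ (forall x, IsScalar cplx (g x)).

(** (Representatives of) functionals on Lip_0(M); only their values on
    Lip_0(M) matter. *)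
Definition Functional (M : PointedMetricSpace) := (M -> C) -> C.

Definition delta {M : PointedMetricSpace} (x : M) : Functional M := fun g => g x.

Definition comb {M : PointedMetricSpace} (l : list (C * M)) : Functional M :=
  fun g => fold_right (fun p acc => Cplus (Cmult (fst p) (g (snd p))) acc) (RtoC 0) l.

Definition fsub {M : PointedMetricSpace} (P Q : Functional M) : Functional M :=
  fun g => Cminus (P g) (Q g).

Definition DualNormLe (cplx : bool) {M : PointedMetricSpace} (P : Functional M) (c : R) : Prop :=
  forall g : M -> C, Lip0 cplx g -> LipLe g 1 -> Cmod (P g) <= c.

(** The Lipschitz-free space F(M): the norm closure in Lip_0(M)^* of the
    K-linear span of the evaluations delta(x). *)
Definition FreeSpace (cplx : bool) (M : PointedMetricSpace) (P : Functional M) : Prop :=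
  forall eps, 0 < eps -> exists l : list (C * M),
    List.Forall (fun p => IsScalar cplx (fst p)) l /\ DualNormLe cplx (fsub P (comb l)) eps.

(** T is a bounded K-linear operator F(M) -> F(N) (equality in F(N) being
    equality on Lip_0(N)). *)
Definition BoundedLinearOp (cplx : bool) (M N : PointedMetricSpace)
    (T : Functional M -> Functional N) : Prop :=
  (forall P, FreeSpace cplx M P -> FreeSpace cplx N (T P)) /\
  (forall (a : C) (P Q : Functional M), IsScalar cplx a ->
     FreeSpace cplx M P -> FreeSpace cplx M Q ->
     forall h : N -> C, Lip0 cplx h ->
       T (fun g => Cplus (Cmult a (P g)) (Q g)) h = Cplus (Cmult a (T P h)) (T Q h)) /\
  (exists K0, 0 <= K0 /\ forall P c, FreeSpace cplx M P -> DualNormLe cplx P c ->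
       DualNormLe cplx (T P) (K0 * c)).

Definition CompactOp (cplx : bool) (M N : PointedMetricSpace)
    (T : Functional M -> Functional N) : Prop :=
  forall u : nat -> Functional M,
    (forall n, FreeSpace cplx M (u n) /\ DualNormLe cplx (u n) 1) ->
    exists (phi : nat -> nat) (Q : Functional N),
      (forall n, (phi n < phi (S n))%nat) /\ FreeSpace cplx N Q /\
      forall eps, 0 < eps -> exists n0, forall n, (n0 <= n)%nat ->
        DualNormLe cplx (fsub (T (u (phi n))) Q) eps.

From Stdlib Require Import Reals List Lra Lia Classical ClassicalEpsilon.
From Coquelicot Require Import Coquelicot.
Open Scope R_scope.

(* If the conclusion failed, there would be pairs (x_n, y_n) with d(x_n, y_n) -> oo
   that f stretches by more than eps.  Their normalised molecules
   (delta(x_n) - delta(y_n)) / d(x_n, y_n) lie in the unit ball of F(M), so by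
   compactness the images (delta(f x_n) - delta(f y_n)) / d(x_n, y_n) have a
   subsequence converging to some Q, which is eps/8-close to a finitely supported
   functional.  Far from that finite support, a 1-Lipschitz tent function h
   annihilates the approximant yet separates f x_n from f y_n by about
   d(f x_n, f y_n) / 2; evaluating at h gives at least eps/4 and at most eps/8 + eps/8. *)

Lemma pm_dist_refl (M : PointedMetricSpace) (x : M) : pm_dist x x = 0.
Proof. now apply pm_dist_eq0. Qed.

Lemma pm_dist_ge0 (M : PointedMetricSpace) (x y : M) : 0 <= pm_dist x y.
Proof.
  pose proof (pm_dist_tri M x y x) as Htri.
  rewrite (pm_dist_sym M y x), pm_dist_refl in Htri. lra.
Qed.

Lemma IsScalar_RtoC (cplx : bool) (r : R) : IsScalar cplx (RtoC r).
Proof. destruct cplx; simpl; auto. Qed.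

Lemma IsScalar_mult (cplx : bool) (a b : C) :
  IsScalar cplx a -> IsScalar cplx b -> IsScalar cplx (Cmult a b).
Proof.
  destruct cplx; simpl; [auto|]. intros Ha Hb.
  destruct a as [a1 a2], b as [b1 b2]. simpl in *. subst. ring.
Qed.

Lemma FreeSpace_comb (cplx : bool) (M : PointedMetricSpace) (l : list (C * M))
  (P : Functional M) :
  List.Forall (fun p => IsScalar cplx (fst p)) l -> (forall g, P g = comb l g) ->
  FreeSpace cplx M P.
Proof.
  intros Hl HP eps Heps. exists l. split; [exact Hl|].
  intros g _ _. unfold fsub. rewrite HP.
  replace (Cminus (comb l g) (comb l g)) with (RtoC 0) by ring.
  rewrite Cmod_0. lra.
Qed.

Lemma comb_eq0 (M : PointedMetricSpace) (l : list (C * M)) (h : M -> C) :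
  (forall p, In p l -> h (snd p) = RtoC 0) -> comb l h = RtoC 0.
Proof.
  unfold comb. induction l as [|p l IH]; intros Hl; simpl; [reflexivity|].
  rewrite IH by (intros q Hq; apply Hl; simpl; auto).
  rewrite (Hl p) by (simpl; auto). ring.
Qed.

Definition comb_radius {N : PointedMetricSpace} (l : list (C * N)) : R :=
  fold_right (fun p acc => pm_dist (snd p) (pm_base N) + acc) 0 l.

Lemma comb_radius_ge0 (N : PointedMetricSpace) (l : list (C * N)) : 0 <= comb_radius l.
Proof.
  induction l as [|p l IH]; simpl; [lra|].
  pose proof (pm_dist_ge0 N (snd p) (pm_base N)). lra.
Qed.

Lemma comb_radius_ge (N : PointedMetricSpace) (l : list (C * N)) (p : C * N) :
  In p l -> pm_dist (snd p) (pm_base N) <= comb_radius l.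
Proof.
  induction l as [|q l IH]; simpl; [tauto|]. intros [<-|Hp].
  - pose proof (comb_radius_ge0 N l). lra.
  - pose proof (IH Hp). pose proof (pm_dist_ge0 N (snd q) (pm_base N)). lra.
Qed.

Lemma DualNormLe_annihilated (cplx : bool) (N : PointedMetricSpace)
  (P Q : Functional N) (l : list (C * N)) (h : N -> C) (e1 e2 : R) :
  DualNormLe cplx (fsub P Q) e1 -> DualNormLe cplx (fsub Q (comb l)) e2 ->
  Lip0 cplx h -> LipLe h 1 -> comb l h = RtoC 0 -> Cmod (P h) <= e1 + e2.
Proof.
  intros HPQ HQl Hh0 Hh1 Hhl.
  replace (P h) with (Cplus (fsub P Q h) (Cplus (fsub Q (comb l) h) (comb l h)))
    by (unfold fsub; ring).
  rewrite Hhl.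
  pose proof (Cmod_triangle (fsub P Q h) (Cplus (fsub Q (comb l) h) (RtoC 0))).
  pose proof (Cmod_triangle (fsub Q (comb l) h) (RtoC 0)).
  pose proof (HPQ h Hh0 Hh1). pose proof (HQl h Hh0 Hh1).
  rewrite Cmod_0 in *. lra.
Qed.

Definition tent {N : PointedMetricSpace} (c : N) (r : R) : N -> C :=
  fun z => RtoC (Rmax 0 (r - pm_dist z c)).

Lemma tent_LipLe1 (N : PointedMetricSpace) (c : N) (r : R) : LipLe (tent c r) 1.
Proof.
  intros x y. unfold tent. rewrite <- RtoC_minus, Cmod_R, Rmult_1_l.
  pose proof (pm_dist_tri N x y c). pose proof (pm_dist_tri N y x c).
  rewrite (pm_dist_sym N y x) in *.
  unfold Rmax; repeat destruct Rle_dec; apply Rabs_le; split; lra.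
Qed.

Lemma tent_Lip0 (cplx : bool) (N : PointedMetricSpace) (c : N) (r : R) :
  r <= pm_dist c (pm_base N) -> Lip0 cplx (tent c r).
Proof.
  intros Hr. split; [|split].
  - unfold tent. rewrite pm_dist_sym. f_equal. unfold Rmax; destruct Rle_dec; lra.
  - exists 1. apply tent_LipLe1.
  - intros z. apply IsScalar_RtoC.
Qed.

Lemma separating_tent_far (cplx : bool) (N : PointedMetricSpace) (l : list (C * N)) (a b : N) :
  pm_dist b (pm_base N) <= pm_dist a (pm_base N) ->
  exists h : N -> C, Lip0 cplx h /\ LipLe h 1 /\ comb l h = RtoC 0 /\
    pm_dist a b / 2 - comb_radius l <= Cmod (Cminus (h a) (h b)).
Proof.
  intros Hba. set (r := pm_dist a (pm_base N) - comb_radius l).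
  pose proof (comb_radius_ge0 N l).
  exists (tent a r). split; [|split; [|split]].
  - apply tent_Lip0. unfold r. lra.
  - apply tent_LipLe1.
  - apply comb_eq0. intros p Hp. unfold tent. f_equal.
    pose proof (comb_radius_ge N l p Hp).
    pose proof (pm_dist_tri N a (snd p) (pm_base N)).
    rewrite (pm_dist_sym N a (snd p)) in *. unfold r, Rmax; destruct Rle_dec; lra.
  - unfold tent. rewrite <- RtoC_minus, Cmod_R, pm_dist_refl, (pm_dist_sym N b a).
    pose proof (pm_dist_tri N a (pm_base N) b). rewrite (pm_dist_sym N (pm_base N) b) in *.
    pose proof (pm_dist_ge0 N a b).
    unfold r, Rmax; repeat destruct Rle_dec; rewrite Rabs_right by lra; lra.
Qed.

Lemma separating_tent (cplx : bool) (N : PointedMetricSpace) (l : list (C * N)) (a b : N) :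
  exists h : N -> C, Lip0 cplx h /\ LipLe h 1 /\ comb l h = RtoC 0 /\
    pm_dist a b / 2 - comb_radius l <= Cmod (Cminus (h a) (h b)).
Proof.
  destruct (Rle_dec (pm_dist b (pm_base N)) (pm_dist a (pm_base N))) as [Hba|Hab].
  - now apply separating_tent_far.
  - destruct (separating_tent_far cplx N l b a) as (h & Hh0 & Hh1 & Hhl & Hsep); [lra|].
    exists h. do 3 (split; [assumption|]).
    replace (Cminus (h a) (h b)) with (Copp (Cminus (h b) (h a))) by ring.
    now rewrite Cmod_opp, pm_dist_sym.
Qed.

Definition flin {M : PointedMetricSpace} (a : C) (P Q : Functional M) : Functional M :=
  fun g => Cplus (Cmult a (P g)) (Q g).

(* The summand delta(0), which vanishes on Lip_0(M), only serves to write the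
   molecule in the shape a P + Q used by the linearity clause of [BoundedLinearOp]. *)
Definition molecule {M : PointedMetricSpace} (x y : M) : Functional M :=
  flin (RtoC (/ pm_dist x y)) (flin (RtoC (-1)) (delta y) (delta x)) (delta (pm_base M)).

Lemma delta_FreeSpace (cplx : bool) (M : PointedMetricSpace) (x : M) :
  FreeSpace cplx M (delta x).
Proof.
  apply (FreeSpace_comb _ _ ((RtoC 1, x) :: nil)).
  - repeat constructor. apply IsScalar_RtoC.
  - intro g. unfold comb, delta; simpl. ring.
Qed.

Lemma flin_FreeSpace (cplx : bool) (M : PointedMetricSpace) (x y : M) :
  FreeSpace cplx M (flin (RtoC (-1)) (delta y) (delta x)).
Proof.
  apply (FreeSpace_comb _ _ ((RtoC (-1), y) :: (RtoC 1, x) :: nil)).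
  - repeat constructor; apply IsScalar_RtoC.
  - intro g. unfold flin, comb, delta; simpl. ring.
Qed.

Lemma molecule_FreeSpace (cplx : bool) (M : PointedMetricSpace) (x y : M) :
  FreeSpace cplx M (molecule x y).
Proof.
  set (s := RtoC (/ pm_dist x y)).
  apply (FreeSpace_comb _ _
    ((Cmult s (RtoC (-1)), y) :: (Cmult s (RtoC 1), x) :: (RtoC 1, pm_base M) :: nil)).
  - repeat constructor; simpl; try apply IsScalar_mult; apply IsScalar_RtoC.
  - intro g. unfold molecule, flin, comb, delta; simpl. fold s. ring.
Qed.

Lemma molecule_apply (M : PointedMetricSpace) (x y : M) (g : M -> C) :
  g (pm_base M) = RtoC 0 ->
  molecule x y g = Cmult (RtoC (/ pm_dist x y)) (Cminus (g x) (g y)).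
Proof. intros Hg0. unfold molecule, flin, delta. rewrite Hg0. ring. Qed.

Lemma molecule_norm_le1 (cplx : bool) (M : PointedMetricSpace) (x y : M) :
  0 < pm_dist x y -> DualNormLe cplx (molecule x y) 1.
Proof.
  intros Hd g [Hg0 _] Hg1. rewrite molecule_apply by exact Hg0.
  rewrite Cmod_mult, Cmod_R, Rabs_right by (apply Rle_ge, Rlt_le, Rinv_0_lt_compat, Hd).
  pose proof (Hg1 x y) as Hxy.
  replace 1 with (/ pm_dist x y * (1 * pm_dist x y)) by (field; lra).
  apply Rmult_le_compat_l; [apply Rlt_le, Rinv_0_lt_compat, Hd | exact Hxy].
Qed.

Section ImageOfMolecule.

Variables (cplx : bool) (M N : PointedMetricSpace) (f : M -> N)
  (T : Functional M -> Functional N).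
Hypothesis HT : BoundedLinearOp cplx M N T.
Hypothesis Hf0 : f (pm_base M) = pm_base N.
Hypothesis HTdelta : forall (x : M) (h : N -> C), Lip0 cplx h -> T (delta x) h = delta (f x) h.

Lemma T_molecule (x y : M) (h : N -> C) :
  Lip0 cplx h ->
  T (molecule x y) h = Cmult (RtoC (/ pm_dist x y)) (Cminus (h (f x)) (h (f y))).
Proof.
  intros Hh. destruct HT as [_ [Hlin _]]. unfold molecule, flin at 1.
  rewrite (Hlin _ _ _ (IsScalar_RtoC _ _) (flin_FreeSpace _ _ x y) (delta_FreeSpace _ _ _) h Hh).
  unfold flin at 1.
  rewrite (Hlin _ _ _ (IsScalar_RtoC _ _) (delta_FreeSpace _ _ _) (delta_FreeSpace _ _ _) h Hh).
  rewrite !HTdelta by exact Hh. unfold delta. rewrite Hf0, (proj1 Hh). ring.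
Qed.

Lemma T_molecule_Cmod (x y : M) (h : N -> C) :
  0 < pm_dist x y -> Lip0 cplx h ->
  Cmod (Cminus (h (f x)) (h (f y))) = pm_dist x y * Cmod (T (molecule x y) h).
Proof.
  intros Hd Hh. rewrite T_molecule, Cmod_mult, Cmod_R, Rabs_right by
    (exact Hh || apply Rle_ge, Rlt_le, Rinv_0_lt_compat, Hd).
  field. lra.
Qed.

End ImageOfMolecule.

Lemma far_stretched_pairs (M N : PointedMetricSpace) (f : M -> N) (eps : R) :
  ~ (exists R0, 0 < R0 /\
       forall x y : M, R0 <= pm_dist x y -> pm_dist (f x) (f y) <= eps * pm_dist x y) ->
  exists x y : nat -> M, forall n,
    INR n + 1 <= pm_dist (x n) (y n) /\
    eps * pm_dist (x n) (y n) < pm_dist (f (x n)) (f (y n)).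
Proof.
  intros Hno.
  assert (Hpair : forall n : nat, exists p : M * M,
    INR n + 1 <= pm_dist (fst p) (snd p) /\
    eps * pm_dist (fst p) (snd p) < pm_dist (f (fst p)) (f (snd p))).
  { intro n. apply NNPP. intro Hn. apply Hno. exists (INR n + 1).
    split; [pose proof (pos_INR n); lra|].
    intros x y Hxy. apply Rnot_lt_le. intro Hlt. apply Hn. now exists (x, y). }
  set (pick := fun n => proj1_sig (constructive_indefinite_description _ (Hpair n))).
  exists (fun n => fst (pick n)), (fun n => snd (pick n)). intro n.
  exact (proj2_sig (constructive_indefinite_description _ (Hpair n))).
Qed.

Lemma subsequence_eventually_large (phi : nat -> nat) (d : nat -> R) (n0 : nat) (A : R) :
  (forall n, (phi n < phi (S n))%nat) -> (forall n, INR n + 1 <= d n) ->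
  exists n, (n0 <= n)%nat /\ A < d (phi n).
Proof.
  intros Hphi Hd.
  assert (Hge : forall n, (n <= phi n)%nat).
  { induction n as [|n IH]; [lia|]. specialize (Hphi n). lia. }
  destruct (INR_unbounded A) as [N1 HN1].
  exists (Nat.max n0 N1). split; [lia|].
  pose proof (le_INR _ _ (Nat.le_trans _ _ _ (Nat.le_max_r n0 N1) (Hge (Nat.max n0 N1)))).
  pose proof (Hd (phi (Nat.max n0 N1))). lra.
Qed.

Theorem mainTheorem9 (cplx : bool) (M N : PointedMetricSpace)
  (HM : Complete M) (HN : Complete N)
  (f : M -> N) (Hf : Lipschitz f) (Hf0 : f (pm_base M) = pm_base N)
  (T : Functional M -> Functional N)
  (HT : BoundedLinearOp cplx M N T)
  (HTdelta : forall (x : M) (h : N -> C), Lip0 cplx h -> T (delta x) h = delta (f x) h)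
  (HTc : CompactOp cplx M N T) :
  forall eps, 0 < eps -> exists R0, 0 < R0 /\
    forall x y : M, R0 <= pm_dist x y -> pm_dist (f x) (f y) <= eps * pm_dist x y.
Proof.
  intros eps Heps. apply NNPP. intro Hno.
  destruct (far_stretched_pairs M N f eps Hno) as (x & y & Hxy).
  set (d := fun n => pm_dist (x n) (y n)).
  assert (Hd : forall n, INR n + 1 <= d n) by (intro n; apply Hxy).
  assert (Hd0 : forall n, 0 < d n) by (intro n; pose proof (pos_INR n); pose proof (Hd n); lra).
  destruct (HTc (fun n => molecule (x n) (y n))) as (phi & Q & Hphi & HQ & Hconv).
  { intro n. split; [apply molecule_FreeSpace | apply molecule_norm_le1, Hd0]. }
  destruct (HQ (eps / 8)) as (l & _ & Hl); [lra|].
  destruct (Hconv (eps / 8)) as (n0 & Hn0); [lra|].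
  destruct (subsequence_eventually_large phi d n0 (4 * comb_radius l / eps) Hphi Hd)
    as (n & Hn & Hfar).
  specialize (Hn0 n Hn). set (k := phi n) in *.
  destruct (separating_tent cplx N l (f (x k)) (f (y k))) as (h & Hh0 & Hh1 & Hhl & Hsep).
  pose proof (DualNormLe_annihilated _ _ _ _ _ _ _ _ Hn0 Hl Hh0 Hh1 Hhl) as Hup.
  rewrite (T_molecule_Cmod cplx M N f T HT Hf0 HTdelta _ _ _ (Hd0 k) Hh0) in Hsep.
  change (pm_dist (x k) (y k)) with (d k) in *.
  assert (Hrad : 4 * comb_radius l < eps * d k).
  { apply (Rmult_lt_compat_l eps) in Hfar; [|exact Heps].
    now replace (eps * (4 * comb_radius l / eps)) with (4 * comb_radius l) in Hfar by (field; lra). }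
  pose proof (Rmult_le_compat_l (d k) _ _ (Rlt_le _ _ (Hd0 k)) Hup).
  pose proof (proj2 (Hxy k)). fold (d k) in *. lra.
Qed.
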